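(* Assume $\nabla f$ is $L$-Lipschitz, and consider the SAM flow at a point where not all $g_k$ vanish. Then the Norm Deviation $Q$ satisfies $$\frac{dQ}{dt}=4\rho u K\cdot\mathrm{Cov}\big(\|\mathcal G_k\|_F^2,\|g_k\|_F^2\big)+R,$$ where there is a constant $C$ depending only on $\Phi$, $K$, $L$, the Frobenius norms of the current cores and $\|\nabla f(\mathcal T)\|_F$ (with $\mathcal T=\Phi(\mathcal G_1,\ldots,\mathcal G_K)$) such that $|R|\le C\rho^2$ for all $\rho\in(0,1]$.
   Context: Let $K\ge 2$. For each $k\in[K]$ let $V_k$ be a finite-dimensional real space of tensors with Frobenius inner product $\langle\cdot,\cdot\rangle_F$ and norm $\|\cdot\|_F$; $[K]=\{1,\ldots,K\}$. Let $\Phi:V_1\times\cdots\times V_K\to\mathbb R^{n_1\times\cdots\times n_d}$ be multilinear, $f:\mathbb R^{n_1\times\cdots\times n_d}\to\mathbb R$ continuously differentiable with $\|\nabla f(\mathcal X)-\nabla f(\mathcal Y)\|_F\le L\|\mathcal X-\mathcal Y\|_F$ for all $\mathcal X,\mathcal Y$, and $F:=f\circ\Phi$. SAM gradient flow with radius $\rho>0$: at a point $(\mathcal G_1,\ldots,\mathcal G_K)$ let $g_k=\nabla_{\mathcal G_k}F(\mathcal G_1,\ldots,\mathcal G_K)$, $u=(\sum_{j=1}^K\|g_j\|_F^2)^{-1/2}$ (requiring not all $g_j=0$), $\tilde{\mathcal G}_k=\mathcal G_k+\rho u g_k$, $\tilde g_k=\nabla_{\mathcal G_k}F(\tilde{\mathcal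 G}_1,\ldots,\tilde{\mathcal G}_K)$; the SAM flow is $\frac{d}{dt}\mathcal G_k=-\tilde g_k$ for all $k$, and time derivatives are along this flow. The Norm Deviation is $Q:=\sum_{k=1}^K\big(\|\mathcal G_k\|_F^2-\frac1K\sum_{i=1}^K\|\mathcal G_i\|_F^2\big)^2$. The empirical covariance is $\mathrm{Cov}(x_k,y_k):=\frac1K\sum_{k=1}^K(x_k-\bar x)(y_k-\bar y)$ with $\bar x,\bar y$ the means over $k\in[K]$. *)

From HB Require Import structures.
From mathcomp Require Import all_boot all_order all_algebra.
From mathcomp Require Import all_classical all_reals all_analysis.
Set Implicit Arguments. Unset Strict Implicit. Unset Printing Implicit Defensive.
Import Order.TTheory GRing.Theory Num.Theory.
Import numFieldNormedType.Exports.
Local Open Scope ring_scope.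

Section SAMDefs.
Variable R : realType.

(* Frobenius inner product and norm on a (flattened) tensor space R^n. *)
Definition frob_dot (m : nat) (x y : 'rV[R]_m) : R := \sum_(j < m) x 0 j * y 0 j.
Definition frob (m : nat) (x : 'rV[R]_m) : R := Num.sqrt (frob_dot x x).

Definition cores (K : nat) (n : 'I_K -> nat) := forall k : 'I_K, 'rV[R]_(n k).

Definition upd (K : nat) (n : 'I_K -> nat) (G : cores n) (k : 'I_K) (x : 'rV[R]_(n k))
  : cores n := @dfwith _ (fun i : 'I_K => 'rV[R]_(n i)) G k x.

Definition multilinear (K N : nat) (n : 'I_K -> nat) (Phi : cores n -> 'rV[R]_N) :=
  forall (G : cores n) (k : 'I_K) (a : R) (x y : 'rV[R]_(n k)),
    Phi (upd G (a *: x + y)) = a *: Phi (upd G x) + Phi (upd G y).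

Definition grad (N : nat) (f : 'rV[R]_N -> R) (X : 'rV[R]_N) : 'rV[R]_N :=
  \row_(i < N) derive1 (fun s : R => f (X + s *: delta_mx 0 i)) 0.

Definition C1 (N : nat) (f : 'rV[R]_N -> R) :=
  (forall X, differentiable f X) /\ continuous (grad f).

Definition grad_lipschitz (N : nat) (f : 'rV[R]_N -> R) (L : R) :=
  forall X Y, frob (grad f X - grad f Y) <= L * frob (X - Y).

Section Flow.
Variables (K N : nat) (n : 'I_K -> nat) (Phi : cores n -> 'rV[R]_N) (f : 'rV[R]_N -> R).

Definition Fobj (G : cores n) : R := f (Phi G).

Definition pgrad (G : cores n) (k : 'I_K) : 'rV[R]_(n k) :=
  \row_(j < n k) derive1 (fun s : R => Fobj (upd G (G k + s *: delta_mx 0 j))) 0.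

Definition sam_u (G : cores n) : R :=
  (Num.sqrt (\sum_(j < K) frob (pgrad G j) ^+ 2))^-1.

Definition sam_perturb (rho : R) (G : cores n) : cores n :=
  fun k => G k + (rho * sam_u G) *: pgrad G k.

Definition sam_vel (rho : R) (G : cores n) : cores n :=
  fun k => - pgrad (sam_perturb rho G) k.

Definition normdev (G : cores n) : R :=
  \sum_(k < K) (frob (G k) ^+ 2 - K%:R^-1 * \sum_(i < K) frob (G i) ^+ 2) ^+ 2.

Definition dQdt (rho : R) (G : cores n) : R :=
  derive1 (fun t : R => normdev (fun k => G k + t *: sam_vel rho G k)) 0.

End Flow.

Definition cov (K : nat) (x y : 'I_K -> R) : R :=
  K%:R^-1 * \sum_(k < K) (x k - K%:R^-1 * \sum_(i < K) x i)
                          * (y k - K%:R^-1 * \sum_(i < K) y i).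

End SAMDefs.

(* Since Phi is multilinear,
   Euler's identity <G_k, grad_{G_k} F(G)> = <grad f(Phi G), Phi G> holds with a
   right-hand side independent of k; applied at the perturbed point G~ it gives
   <G_k, -g~_k> = rho u <g_k, g~_k> - c with c independent of k, and c drops out
   of dQ/dt = 4 sum_k A_k <G_k, dG_k/dt> because the deviations A_k sum to zero.
   What remains is 4 rho u sum_k A_k <g_k, g~_k>, whose main part
   4 rho u sum_k A_k |g_k|^2 is the covariance term; the rest is controlled by
   g~_k - g_k, which is O(rho) because G~ - G = rho u g = O(rho) (as u |g_k| <= 1)
   and G |-> grad_{G_k} F(G) is Lipschitz on bounded sets (grad f is Lipschitz
   and Phi is multilinear). *)
From HB Require Import structures.
From mathcomp Require Import all_boot all_order all_algebra.
From mathcomp Require Import all_classical all_reals all_analysis.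
From mathcomp Require Import ring lra.
Import Order.TTheory GRing.Theory Num.Theory.
Import numFieldNormedType.Exports.
Set Implicit Arguments. Unset Strict Implicit. Unset Printing Implicit Defensive.
Local Open Scope ring_scope.

Section FrobeniusL1.
Variable R : realType.
Implicit Types m : nat.

Lemma ler_sum_term (I : finType) (F : I -> R) i :
  (forall j, 0 <= F j) -> F i <= \sum_j F j.
Proof. by move=> F_ge0; rewrite (bigD1 i) //= lerDl sumr_ge0. Qed.

Lemma frob_dotC m (x y : 'rV[R]_m) : frob_dot x y = frob_dot y x.
Proof. by apply: eq_bigr => j _; rewrite mulrC. Qed.

Lemma frob_dotDl m (x y z : 'rV[R]_m) :
  frob_dot (x + y) z = frob_dot x z + frob_dot y z.
Proof. by rewrite /frob_dot -big_split; apply: eq_bigr => j _; rewrite mxE mulrDl. Qed.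

Lemma frob_dotDr m (x y z : 'rV[R]_m) :
  frob_dot z (x + y) = frob_dot z x + frob_dot z y.
Proof. by rewrite frob_dotC frob_dotDl !(frob_dotC z). Qed.

Lemma frob_dotZl m a (x y : 'rV[R]_m) : frob_dot (a *: x) y = a * frob_dot x y.
Proof. by rewrite /frob_dot mulr_sumr; apply: eq_bigr => j _; rewrite mxE mulrA. Qed.

Lemma frob_dotZr m a (x y : 'rV[R]_m) : frob_dot y (a *: x) = a * frob_dot y x.
Proof. by rewrite frob_dotC frob_dotZl frob_dotC. Qed.

Lemma frob_dotNr m (x y : 'rV[R]_m) : frob_dot y (- x) = - frob_dot y x.
Proof. by rewrite -scaleN1r frob_dotZr mulN1r. Qed.

Lemma frob_dotBl m (x y z : 'rV[R]_m) :
  frob_dot (x - y) z = frob_dot x z - frob_dot y z.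
Proof. by rewrite -scaleN1r frob_dotDl frob_dotZl mulN1r. Qed.

Lemma frob_dotBr m (x y z : 'rV[R]_m) :
  frob_dot z (x - y) = frob_dot z x - frob_dot z y.
Proof. by rewrite frob_dotC frob_dotBl !(frob_dotC z). Qed.

Lemma frob_dot_sumr m p (c : 'I_p -> R) (y : 'I_p -> 'rV[R]_m) x :
  frob_dot x (\sum_(j < p) c j *: y j) = \sum_(j < p) c j * frob_dot x (y j).
Proof.
elim/big_rec2: _; first by rewrite /frob_dot big1 // => j _; rewrite mxE mulr0.
by move=> j a b _ <-; rewrite frob_dotDr frob_dotZr.
Qed.

Lemma frob_dot_ge0 m (x : 'rV[R]_m) : 0 <= frob_dot x x.
Proof. by apply: sumr_ge0 => j _; rewrite -expr2 sqr_ge0. Qed.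

Lemma frob_ge0 m (x : 'rV[R]_m) : 0 <= frob x.
Proof. exact: sqrtr_ge0. Qed.

Lemma sqr_frob m (x : 'rV[R]_m) : frob x ^+ 2 = frob_dot x x.
Proof. by rewrite /frob sqr_sqrtr // frob_dot_ge0. Qed.

Lemma normr_le_frob m (x : 'rV[R]_m) j : `|x 0 j| <= frob x.
Proof.
rewrite -sqrtr_sqr /frob ler_sqrt ?frob_dot_ge0 // expr2 /frob_dot.
by apply: (ler_sum_term (F := fun j => x 0 j * x 0 j)) => i; rewrite -expr2 sqr_ge0.
Qed.

Definition l1norm m (x : 'rV[R]_m) : R := \sum_(j < m) `|x 0 j|.

Lemma l1norm_ge0 m (x : 'rV[R]_m) : 0 <= l1norm x.
Proof. exact: sumr_ge0. Qed.

Lemma l1norm_le m (x : 'rV[R]_m) c :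
  (forall j, `|x 0 j| <= c) -> l1norm x <= m%:R * c.
Proof.
move=> x_le; rewrite /l1norm mulr_natl -[m in _ *+ m]card_ord -sumr_const.
exact: ler_sum.
Qed.

Lemma l1norm_le_frob m (x : 'rV[R]_m) : l1norm x <= m%:R * frob x.
Proof. exact/l1norm_le/normr_le_frob. Qed.

Lemma frob_le_l1norm m (x : 'rV[R]_m) : frob x <= l1norm x.
Proof.
rewrite /frob -(ger0_norm (l1norm_ge0 x)) -sqrtr_sqr ler_sqrt ?sqr_ge0 //.
rewrite /l1norm expr2 mulr_suml; apply: ler_sum => i _.
apply: le_trans (ler_norm _) _; rewrite normrM ler_wpM2l //.
exact: (ler_sum_term (F := fun j => `|x 0 j|)).
Qed.

Lemma normr_frob_dot_le m (x y : 'rV[R]_m) : `|frob_dot x y| <= frob x * l1norm y.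
Proof.
rewrite /frob_dot /l1norm mulr_sumr; apply: (le_trans (ler_norm_sum _ _ _)).
by apply: ler_sum => j _; rewrite normrM ler_wpM2r // normr_le_frob.
Qed.

Lemma l1normD m (x y : 'rV[R]_m) : l1norm (x + y) <= l1norm x + l1norm y.
Proof. by rewrite /l1norm -big_split; apply: ler_sum => j _; rewrite mxE ler_normD. Qed.

Lemma l1normZ m a (x : 'rV[R]_m) : l1norm (a *: x) = `|a| * l1norm x.
Proof. by rewrite /l1norm mulr_sumr; apply: eq_bigr => j _; rewrite mxE normrM. Qed.

Lemma l1norm0 m : l1norm (0 : 'rV[R]_m) = 0.
Proof. by rewrite /l1norm big1 // => j _; rewrite mxE normr0. Qed.

Lemma l1norm_sum m p (y : 'I_p -> 'rV[R]_m) :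
  l1norm (\sum_(j < p) y j) <= \sum_(j < p) l1norm (y j).
Proof.
elim/big_rec2: _ => [|j a b _ le_ab]; first by rewrite l1norm0.
by apply: le_trans (l1normD _ _) _; rewrite lerD2l.
Qed.

Lemma l1norm_delta m (j : 'I_m) : l1norm (delta_mx 0 j : 'rV[R]_m) = 1.
Proof.
rewrite /l1norm (bigD1 j) //= big1 ?addr0 => [|i /negbTE ij]; rewrite mxE.
  by rewrite !eqxx normr1.
by rewrite ij andbF normr0.
Qed.

End FrobeniusL1.

Section Derivatives.
Variable R : realType.

Lemma is_derive_sqr_quadratic0 (A B C : R) :
  is_derive (0 : R) (1 : R) (fun t : R => (A + B * t + C * t ^+ 2) ^+ 2) (2 * A * B).
Proof.
have -> : (fun t : R => (A + B * t + C * t ^+ 2) ^+ 2) =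
          (cst A + B \*o id + C \*o (id ^+ 2)) ^+ 2 by apply: funext.
apply: is_derive_eq.
change ((2%:R * (A + B * 0 + C * (0 * 0)) ^+ 1) * (0 + B * 1 + C * ((2%:R * 0 ^+ 1) * 1))
        = 2 * A * B).
ring.
Qed.

Lemma derive1_sum_sqr_quadratic0 m (A B C : 'I_m -> R) :
  derive1 (fun t : R => \sum_(k < m) (A k + B k * t + C k * t ^+ 2) ^+ 2) 0
  = \sum_(k < m) 2 * A k * B k.
Proof.
rewrite derive1E -fct_sumE.
have := is_derive_sum (fun k => is_derive_sqr_quadratic0 (A k) (B k) (C k)).
by move=> ?; rewrite derive_val.
Qed.

Lemma derive1_line_grad N (f : 'rV[R]_N -> R) (X v : 'rV[R]_N) :
  differentiable f X -> derive1 (fun s : R => f (X + s *: v)) 0 = frob_dot (grad f X) v.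
Proof.
move=> df.
have line_diff (w : 'rV[R]_N) : derive1 (fun s : R => f (X + s *: w)) 0 = 'd f X w.
  rewrite -deriveE // derive1E /derive scale0r addr0.
  by do 2 f_equal; apply: funext => h /=; rewrite addr0 [h%:A]mulr1 [X + _]addrC.
rewrite line_diff {1}(row_sum_delta v) linear_sum /frob_dot.
by apply: eq_bigr => j _; rewrite linearZ /= mxE line_diff mulrC.
Qed.

End Derivatives.

Section Multilinear.
Variables (R : realType) (K N : nat) (n : 'I_K -> nat) (Phi : cores R n -> 'rV[R]_N).
Implicit Types (G H : cores R n) (k : 'I_K).

Lemma upd_in G k (x : 'rV_(n k)) : upd G x k = x.
Proof. exact: dfwith_in. Qed.

Lemma upd_out G k (x : 'rV_(n k)) i : k != i -> upd G x i = G i.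
Proof. exact: dfwith_out. Qed.

Lemma upd_id G k : upd G (G k) = G.
Proof.
apply: functional_extensionality_dep => i.
by case: (eqVneq k i) => [<-|ne]; [exact: upd_in | exact: upd_out].
Qed.

Hypothesis Phi_ml : multilinear Phi.

Lemma Phi_upd0 G k : Phi (@upd _ _ _ G k 0) = 0.
Proof.
have /(congr1 (fun z => z - Phi (@upd _ _ _ G k 0))) := @Phi_ml G k 1 0 0.
by rewrite !scale1r addr0 subrr addrK.
Qed.

Lemma Phi_updB G k (x y : 'rV_(n k)) :
  Phi (upd G (x - y)) = Phi (upd G x) - Phi (upd G y).
Proof.
have Phi_updZ a (z : 'rV_(n k)) : Phi (upd G (a *: z)) = a *: Phi (upd G z).
  by have := @Phi_ml G k a z 0; rewrite !addr0 Phi_upd0 addr0.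
have := @Phi_ml G k 1 x (- y); rewrite !scale1r => ->.
by rewrite -[- y]scaleN1r Phi_updZ scaleN1r.
Qed.

Lemma Phi_upd_sum G k m (c : 'I_m -> R) (x : 'I_m -> 'rV_(n k)) :
  Phi (upd G (\sum_(j < m) c j *: x j)) = \sum_(j < m) c j *: Phi (upd G (x j)).
Proof. by elim/big_rec2: _ => [|j y z _ <-]; rewrite ?Phi_upd0 ?Phi_ml. Qed.

Lemma Phi_upd_line G k (e : 'rV_(n k)) (s : R) :
  Phi (upd G (G k + s *: e)) = Phi G + s *: Phi (upd G e).
Proof. by rewrite addrC Phi_ml upd_id addrC. Qed.

Definition basis_cores (j : {dffun forall k : 'I_K, 'I_(n k)}) : cores R n :=
  fun k => delta_mx 0 (j k).

Definition ml_bound : R :=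
  \sum_(j : {dffun forall k : 'I_K, 'I_(n k)}) l1norm (Phi (basis_cores j)).

Lemma ml_bound_ge0 : 0 <= ml_bound.
Proof. by apply: sumr_ge0 => j _; exact: l1norm_ge0. Qed.

Lemma prod_l1norm_upd H k0 (x : 'rV_(n k0)) :
  \prod_k l1norm (upd H x k) = l1norm x * \prod_(k | k != k0) l1norm (H k).
Proof.
rewrite (bigD1 k0) //= upd_in; congr (_ * _); apply: eq_bigr => k nk.
by rewrite upd_out // eq_sym.
Qed.

(* Expanding every core in the standard basis writes Phi H as a combination of the
   Phi (basis_cores j) with coefficients of absolute value prod_k |(H k) (j k)|. *)
Lemma l1norm_Phi_le H : l1norm (Phi H) <= ml_bound * \prod_k l1norm (H k).
Proof.
suff: forall m H, (forall k : 'I_K, (m <= k)%N -> exists j, H k = delta_mx 0 j) ->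
    l1norm (Phi H) <= ml_bound * \prod_k l1norm (H k).
  by move/(_ K H); apply=> k; rewrite leqNgt ltn_ord.
elim=> [|m IH] {}H H_basis.
  have [j Hj] := fin_all_exists (fun k => H_basis k (leq0n _)).
  have -> : H = basis_cores [ffun k => j k].
    by apply: functional_extensionality_dep => k; rewrite /basis_cores ffunE Hj.
  rewrite big1 ?mulr1 => [|k _]; last by rewrite /basis_cores l1norm_delta.
  apply: (ler_sum_term (F := fun j => l1norm (Phi (basis_cores j)))) => i.
  exact: l1norm_ge0.
have [mK|Km] := ltnP m K; last first.
  by apply: IH => k; rewrite leqNgt (leq_trans (ltn_ord k) Km).
pose k0 := Ordinal mK.
rewrite -(upd_id H k0) {1}(row_sum_delta (H k0)) Phi_upd_sum //.
apply: le_trans (l1norm_sum _) _.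
rewrite prod_l1norm_upd [l1norm (H k0)]/l1norm mulrCA mulr_suml.
apply: ler_sum => j _; rewrite l1normZ ler_wpM2l //.
apply: le_trans (IH _ _) _; last by rewrite prod_l1norm_upd l1norm_delta mul1r.
move=> k; case: (eqVneq k0 k) => [<-|ne le_mk]; first by exists j; rewrite upd_in.
rewrite upd_out //; apply: H_basis; rewrite ltn_neqAle le_mk andbT.
by apply: contra ne => /eqP e; apply/eqP/val_inj.
Qed.

Lemma l1norm_Phi_upd_le H k0 (x : 'rV_(n k0)) B : 1 <= B ->
  (forall k, l1norm (H k) <= B) -> l1norm (Phi (upd H x)) <= ml_bound * (l1norm x * B ^+ K).
Proof.
move=> B_ge1 H_le; apply: le_trans (l1norm_Phi_le _) _.
rewrite prod_l1norm_upd ler_wpM2l ?ml_bound_ge0 // ler_wpM2l ?l1norm_ge0 //.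
apply: (@le_trans _ _ (\prod_(k < K | k != k0) B)).
  by apply: ler_prod => k _; rewrite l1norm_ge0 H_le.
have -> : B ^+ K = \prod_(k < K) B by rewrite prodr_const card_ord.
rewrite [leRHS](bigD1 k0) //= ler_peMl // prodr_ge0 // => k _.
exact: le_trans B_ge1.
Qed.

Lemma l1norm_Phi_sub_le H H' B d : 1 <= B ->
  (forall k, l1norm (H k) <= B) -> (forall k, l1norm (H' k) <= B) ->
  (forall k, l1norm (H' k - H k) <= d) ->
  l1norm (Phi H' - Phi H) <= ml_bound * B ^+ K * (K%:R * d).
Proof.
move=> B_ge1 H_le H'_le d_ge.
pose splice m : cores R n := fun k => if (k < m)%N then H' k else H k.
have splice_le m k : l1norm (splice m k) <= B by rewrite /splice; case: ifP.
suff: forall m, (m <= K)%N ->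
    l1norm (Phi (splice m) - Phi H) <= ml_bound * B ^+ K * (m%:R * d).
  move/(_ K (leqnn K)); congr (l1norm (_ - _) <= _); congr Phi.
  by apply: functional_extensionality_dep => k; rewrite /splice ltn_ord.
elim=> [|m IH] lt_mK.
  have -> : splice 0 = H by apply: functional_extensionality_dep.
  by rewrite subrr l1norm0 mul0r mulr0.
pose k0 := Ordinal lt_mK.
have spliceS : splice m.+1 = upd (splice m) (H' k0).
  apply: functional_extensionality_dep => k; case: (eqVneq k0 k) => [<-|ne].
    by rewrite upd_in /splice /= ltnSn.
  rewrite upd_out // /splice ltnS leq_eqVlt.
  suff /negbTE -> : val k != m by [].
  by apply: contra ne => /eqP e; apply/eqP/val_inj.
have splice_id : splice m = upd (splice m) (H k0).
  by rewrite -{1}(upd_id (splice m) k0) /splice /= ltnn.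
rewrite spliceS -(subrKA (Phi (upd (splice m) (H k0)))) -Phi_updB // -splice_id.
apply: le_trans (l1normD _ _) _.
rewrite -nat1r mulrDl mul1r mulrDr lerD ?IH ?(ltnW lt_mK) //.
apply: le_trans (l1norm_Phi_upd_le _ B_ge1 (splice_le m)) _.
rewrite -mulrA ler_wpM2l ?ml_bound_ge0 // mulrC ler_wpM2l ?exprn_ge0 //.
exact: le_trans B_ge1.
Qed.

End Multilinear.

Section PartialGradient.
Variables (R : realType) (K N : nat) (n : 'I_K -> nat).
Variables (Phi : cores R n -> 'rV[R]_N) (f : 'rV[R]_N -> R).
Hypotheses (Phi_ml : multilinear Phi) (f_diff : forall X, differentiable f X).
Implicit Types (G H : cores R n) (k : 'I_K).

Lemma pgradE G k :
  pgrad Phi f G k = \row_(j < n k) frob_dot (grad f (Phi G)) (Phi (upd G (delta_mx 0 j))).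
Proof.
apply/rowP => j; rewrite !mxE /Fobj.
under eq_fun do rewrite Phi_upd_line //.
exact: derive1_line_grad.
Qed.

Lemma frob_dot_pgrad G k (v : 'rV_(n k)) :
  frob_dot v (pgrad Phi f G k) = frob_dot (grad f (Phi G)) (Phi (upd G v)).
Proof.
rewrite pgradE {2}(row_sum_delta v) Phi_upd_sum // frob_dot_sumr.
by apply: eq_bigr => j _; rewrite mxE.
Qed.

Lemma euler_pgrad G k :
  frob_dot (G k) (pgrad Phi f G k) = frob_dot (grad f (Phi G)) (Phi G).
Proof. by rewrite frob_dot_pgrad upd_id. Qed.

Lemma l1norm_pgrad_sub_le G G' k B d Lb b : 1 <= B ->
  (forall i, l1norm (G i) <= B) -> (forall i, l1norm (G' i) <= B) ->
  (forall i, l1norm (G' i - G i) <= d) ->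
  (forall X Y, frob (grad f X - grad f Y) <= Lb * frob (X - Y)) -> 0 <= Lb ->
  frob (grad f (Phi G)) <= b ->
  l1norm (pgrad Phi f G' k - pgrad Phi f G k) <=
    (n k)%:R * (d * (ml_bound Phi * B ^+ K * K%:R) * (Lb * (ml_bound Phi * B ^+ K) + b)).
Proof.
move=> B_ge1 G_le G'_le d_ge f_lip Lb_ge0 b_ge.
have upd_le H (x : 'rV_(n k)) :
    (forall i, l1norm (H i) <= B) -> l1norm x <= B -> forall i, l1norm (upd H x i) <= B.
  by move=> H_le x_le i; case: (eqVneq k i) => [<-|ne]; rewrite ?upd_in ?upd_out.
apply: l1norm_le => j; rewrite !pgradE !mxE.
set e := delta_mx 0 j; set w' := Phi (upd G' e); set w := Phi (upd G e).
set D' := grad f (Phi G'); set D := grad f (Phi G).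
have -> : frob_dot D' w' - frob_dot D w = frob_dot (D' - D) w' + frob_dot D (w' - w).
  by rewrite frob_dotBl frob_dotBr; ring.
have e_le : l1norm e <= B by rewrite l1norm_delta.
have w'_le : l1norm w' <= ml_bound Phi * B ^+ K.
  by apply: le_trans (l1norm_Phi_upd_le Phi_ml e B_ge1 G'_le) _; rewrite l1norm_delta mul1r.
have w'w_le : l1norm (w' - w) <= ml_bound Phi * B ^+ K * (K%:R * d).
  apply: l1norm_Phi_sub_le B_ge1 _ _ _ => // [i|i|i]; rewrite ?upd_le //.
  case: (eqVneq k i) => [<-|ne]; rewrite ?upd_in ?upd_out // subrr l1norm0.
  exact: le_trans (l1norm_ge0 _) (d_ge k).
have PG_le : frob (Phi G' - Phi G) <= ml_bound Phi * B ^+ K * (K%:R * d).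
  exact: le_trans (frob_le_l1norm _) (l1norm_Phi_sub_le Phi_ml B_ge1 G_le G'_le d_ge).
have DD_le := le_trans (f_lip (Phi G') (Phi G)) (ler_wpM2l Lb_ge0 PG_le).
have := ler_pM (frob_ge0 _) (l1norm_ge0 _) DD_le w'_le.
have := ler_pM (frob_ge0 D) (l1norm_ge0 _) b_ge w'w_le.
have := lerD (normr_frob_dot_le (D' - D) w') (normr_frob_dot_le D (w' - w)).
have := ler_normD (frob_dot (D' - D) w') (frob_dot D (w' - w)).
lra.
Qed.

End PartialGradient.

Section Centering.
Variables (R : realType) (K : nat).
Implicit Types x y : 'I_K -> R.

Definition centered x k : R := x k - K%:R^-1 * \sum_i x i.

Lemma sum_centered x : (0 < K)%N -> \sum_k centered x k = 0.
Proof.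
move=> K_gt0; rewrite sumrB sumr_const card_ord -mulrnAl -mulr_natr mulVf ?mul1r ?subrr //.
by rewrite pnatr_eq0 -lt0n.
Qed.

Lemma sum_centered_mul x y : (0 < K)%N ->
  \sum_k centered x k * y k = \sum_k centered x k * centered y k.
Proof.
move=> K_gt0; apply/eqP; rewrite -subr_eq0 -sumrB.
rewrite (eq_bigr (fun k => centered x k * (K%:R^-1 * \sum_i y i))) => [|k _].
  by rewrite -mulr_suml sum_centered // mul0r.
by rewrite /centered; ring.
Qed.

Lemma natr_mul_cov x y : (0 < K)%N -> K%:R * cov x y = \sum_k centered x k * y k.
Proof.
move=> K_gt0; rewrite /cov mulrA mulfV ?pnatr_eq0 -?lt0n // mul1r.
by rewrite sum_centered_mul.
Qed.

Lemma normr_centered_le x k : `|centered x k| <= 2 * \sum_i `|x i|.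
Proof.
have K_ge1 : (1 <= K)%N by apply: leq_ltn_trans (ltn_ord k).
have xk_le : `|x k| <= \sum_i `|x i| by apply: (ler_sum_term (F := fun i => `|x i|)).
have inv_le1 : K%:R^-1 <= 1 :> R by rewrite invf_le1 ?ltr0n // ler1n.
have mean_le : K%:R^-1 * `|\sum_i x i| <= `|\sum_i x i|.
  by rewrite ler_piMl // invr_ge0.
have sum_le : `|\sum_i x i| <= \sum_i `|x i| := ler_norm_sum _ _ _.
have := ler_normB (x k) (K%:R^-1 * \sum_i x i).
rewrite /centered normrM ger0_norm ?invr_ge0 //.
lra.
Qed.

End Centering.

Lemma derive1_normdev_line (R : realType) (K : nat) (n : 'I_K -> nat) (G V : cores R n) :
  (0 < K)%N ->
  derive1 (fun t : R => normdev (fun k => G k + t *: V k)) 0 =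
  4 * \sum_k centered (fun i => frob (G i) ^+ 2) k * frob_dot (G k) (V k).
Proof.
move=> K_gt0.
pose al k := frob (G k) ^+ 2; pose be k := 2 * frob_dot (G k) (V k).
pose ga k := frob_dot (V k) (V k).
have sqr_frob_line t k : frob (G k + t *: V k) ^+ 2 = al k + be k * t + ga k * t ^+ 2.
  rewrite /al /be /ga !sqr_frob frob_dotDl !frob_dotDr !frob_dotZl !frob_dotZr.
  by rewrite (frob_dotC (V k)); ring.
have -> : (fun t : R => normdev (fun k => G k + t *: V k)) = fun t =>
    \sum_k (centered al k + centered be k * t + centered ga k * t ^+ 2) ^+ 2.
  apply: funext => t; apply: eq_bigr => k _.
  rewrite sqr_frob_line (eq_bigr _ (fun i _ => sqr_frob_line t i)) /centered.
  by rewrite !big_split /= -!mulr_suml; congr (_ ^+ 2); ring.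
rewrite derive1_sum_sqr_quadratic0.
under eq_bigr do rewrite -mulrA.
rewrite -mulr_sumr -sum_centered_mul // mulr_sumr [RHS]mulr_sumr.
by apply: eq_bigr => k _; rewrite /be; ring.
Qed.

Section SAMFlow.
Variables (R : realType) (K N : nat) (n : 'I_K -> nat).
Variables (Phi : cores R n -> 'rV[R]_N) (f : 'rV[R]_N -> R) (rho : R) (G : cores R n).

Local Notation g := (pgrad Phi f G).
Local Notation u := (sam_u Phi f G).
Local Notation Gt := (sam_perturb Phi f rho G).
Local Notation gt := (pgrad Phi f Gt).

Lemma sam_u_ge0 : 0 <= u.
Proof. by rewrite invr_ge0 sqrtr_ge0. Qed.

Lemma sam_u_frob_le1 k : u * frob (g k) <= 1.
Proof.
rewrite /sam_u; set S := \sum_(j < K) _.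
have [->|S_neq0] := eqVneq (Num.sqrt S) 0; first by rewrite invr0 mul0r.
have g_le : frob (g k) <= Num.sqrt S.
  rewrite -(ger0_norm (frob_ge0 (g k))) -sqrtr_sqr ler_sqrt ?sumr_ge0 // => [|j _].
    by apply: (ler_sum_term (F := fun j => frob (g j) ^+ 2)) => j; exact: sqr_ge0.
  exact: sqr_ge0.
by apply: le_trans (ler_wpM2l sam_u_ge0 g_le) _; rewrite mulVf.
Qed.

Lemma l1norm_sam_perturb_sub k : 0 <= rho -> l1norm (Gt k - G k) <= rho * (n k)%:R.
Proof.
move=> rho_ge0; rewrite /sam_perturb addrAC subrr add0r l1normZ.
rewrite ger0_norm ?mulr_ge0 ?sam_u_ge0 //.
apply: le_trans (ler_wpM2l (mulr_ge0 rho_ge0 sam_u_ge0) (l1norm_le_frob _)) _.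
rewrite -mulrA ler_wpM2l // mulrCA ler_piMr //; exact: sam_u_frob_le1.
Qed.

Hypotheses (Phi_ml : multilinear Phi) (f_diff : forall X, differentiable f X).

Lemma dQdt_sam : (0 < K)%N ->
  dQdt Phi f rho G =
  4 * (rho * u) * \sum_k centered (fun i => frob (G i) ^+ 2) k * frob_dot (g k) (gt k).
Proof.
move=> K_gt0; rewrite /dQdt derive1_normdev_line //.
pose c := frob_dot (grad f (Phi Gt)) (Phi Gt).
have G_vel k : frob_dot (G k) (sam_vel Phi f rho G k) = rho * u * frob_dot (g k) (gt k) - c.
  have -> : G k = Gt k - (rho * u) *: g k by rewrite addrK.
  by rewrite frob_dotNr frob_dotBl frob_dotZl euler_pgrad // opprB.
under eq_bigr do rewrite G_vel mulrBr.
rewrite sumrB -mulr_suml sum_centered // mul0r subr0 -mulrA mulr_sumr.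
by congr (_ * _); apply: eq_bigr => k _; ring.
Qed.

Lemma dQdt_sam_sub_cov : (0 < K)%N ->
  dQdt Phi f rho G
    - 4 * rho * u * K%:R * cov (fun k => frob (G k) ^+ 2) (fun k => frob (g k) ^+ 2) =
  4 * (rho * u) * \sum_k centered (fun i => frob (G i) ^+ 2) k * frob_dot (g k) (gt k - g k).
Proof.
move=> K_gt0; rewrite dQdt_sam //.
set cv := cov _ _; have -> : 4 * rho * u * K%:R * cv = 4 * (rho * u) * (K%:R * cv) by ring.
rewrite /cv natr_mul_cov // -mulrBr -sumrB; congr (_ * _); apply: eq_bigr => k _.
by rewrite frob_dotBr sqr_frob mulrBr.
Qed.

End SAMFlow.

Section SAMRemainder.
Variables (R : realType) (K N : nat) (n : 'I_K -> nat) (Phi : cores R n -> 'rV[R]_N).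
Variables (a : 'I_K -> R) (b L : R).

Definition core_bound : R := 1 + \sum_k (n k)%:R * (`|a k| + 1).

Definition pgrad_shift_const : R :=
  core_bound ^+ 2 * (ml_bound Phi * core_bound ^+ K * K%:R)
    * (`|L| * (ml_bound Phi * core_bound ^+ K) + `|b|).

Lemma l1norm_pgrad_sam_sub_le (f : 'rV[R]_N -> R) (G : cores R n) rho k :
  multilinear Phi -> (forall X, differentiable f X) -> grad_lipschitz f L ->
  (forall i, frob (G i) = a i) -> frob (grad f (Phi G)) = b -> 0 <= rho <= 1 ->
  l1norm (pgrad Phi f (sam_perturb Phi f rho G) k - pgrad Phi f G k)
    <= rho * pgrad_shift_const.
Proof.
move=> Phi_ml f_diff f_lip Ga gradb /andP[rho_ge0 rho_le1].
set B := core_bound; set Gt := sam_perturb Phi f rho G.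
have term_le i : (n i)%:R * (`|a i| + 1) <= B.
  apply: le_trans (ler_sum_term (F := fun i => (n i)%:R * (`|a i| + 1)) i _) _ => [j|].
    by rewrite mulr_ge0 // addr_ge0.
  by rewrite lerDr.
have B_ge1 : 1 <= B by rewrite lerDl sumr_ge0 // => i _; rewrite mulr_ge0 // addr_ge0.
have n_le i : (n i)%:R <= B by apply: le_trans (term_le i); rewrite ler_peMr // lerDr.
have G_le i : l1norm (G i) <= (n i)%:R * `|a i|.
  by apply: le_trans (l1norm_le_frob _) _; rewrite Ga ler_wpM2l // ler_norm.
have GtG_le i := l1norm_sam_perturb_sub Phi f G i rho_ge0.
have G_leB i : l1norm (G i) <= B.
  by apply: le_trans (G_le i) (le_trans _ (term_le i)); rewrite ler_wpM2l // lerDl.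
have Gt_leB i : l1norm (Gt i) <= B.
  have -> : Gt i = G i + (Gt i - G i) by rewrite addrC subrK.
  apply: le_trans (l1normD _ _) (le_trans _ (term_le i)).
  have := ler_piMl (ler0n R (n i)) rho_le1; have := G_le i; have := GtG_le i.
  by rewrite mulrDr mulr1; lra.
have d_le i : l1norm (Gt i - G i) <= rho * B.
  by apply: le_trans (GtG_le i) _; rewrite ler_wpM2l.
have f_lip' X Y : frob (grad f X - grad f Y) <= `|L| * frob (X - Y).
  by apply: le_trans (f_lip X Y) _; rewrite ler_wpM2r ?frob_ge0 ?ler_norm.
have gradb' : frob (grad f (Phi G)) <= `|b| by rewrite gradb ler_norm.
apply: le_trans (l1norm_pgrad_sub_le Phi_ml f_diff k B_ge1 G_leB Gt_leB d_le f_lip'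
  (normr_ge0 L) gradb') _.
have P_ge0 : 0 <= ml_bound Phi * B ^+ K.
  by rewrite mulr_ge0 ?ml_bound_ge0 // exprn_ge0 // (le_trans _ B_ge1).
set W := _ * (_ + _).
have W_ge0 : 0 <= W.
  rewrite /W; apply: mulr_ge0; last by rewrite addr_ge0 // mulr_ge0.
  apply: mulr_ge0; first by rewrite mulr_ge0 // (le_trans _ B_ge1).
  exact: mulr_ge0 P_ge0 (ler0n _ _).
have -> : rho * pgrad_shift_const = B * W by rewrite /pgrad_shift_const -/B /W; ring.
by apply: ler_wpM2r.
Qed.

Lemma sam_remainder_term_le (f : 'rV[R]_N -> R) (G : cores R n) rho k :
  multilinear Phi -> (forall X, differentiable f X) -> grad_lipschitz f L ->
  (forall i, frob (G i) = a i) -> frob (grad f (Phi G)) = b -> 0 <= rho <= 1 ->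
  `|4 * (rho * sam_u Phi f G) * (centered (fun i => frob (G i) ^+ 2) k
      * frob_dot (pgrad Phi f G k) (pgrad Phi f (sam_perturb Phi f rho G) k - pgrad Phi f G k))|
    <= 4 * rho * ((2 * \sum_i a i ^+ 2) * (rho * pgrad_shift_const)).
Proof.
move=> Phi_ml f_diff f_lip Ga gradb rho_01; have /andP[rho_ge0 _] := rho_01.
have u_ge0 := sam_u_ge0 Phi f G; set u := sam_u Phi f G in u_ge0 *.
set A := centered _ k; set D := frob_dot _ _.
have A_le : `|A| <= 2 * \sum_i a i ^+ 2.
  apply: le_trans (normr_centered_le _ k) _.
  by rewrite ler_wpM2l // ler_sum // => i _; rewrite Ga ger0_norm // sqr_ge0.
have D_le : u * `|D| <= rho * pgrad_shift_const.
  apply: le_trans (ler_wpM2l u_ge0 (normr_frob_dot_le _ _)) _.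
  rewrite mulrA -[leRHS]mul1r ler_pM ?mulr_ge0 ?frob_ge0 ?l1norm_ge0 //.
    exact: sam_u_frob_le1.
  exact: l1norm_pgrad_sam_sub_le.
have -> : `|4 * (rho * u) * (A * D)| = 4 * rho * (`|A| * (u * `|D|)).
  by rewrite !normrM normr_nat (ger0_norm rho_ge0) (ger0_norm u_ge0); ring.
apply: ler_wpM2l; first by rewrite mulr_ge0.
by apply: ler_pM; rewrite ?mulr_ge0.
Qed.

End SAMRemainder.

Unset Implicit Arguments.

Theorem theorem3 (R : realType) (K N : nat) (n : 'I_K -> nat)
    (Phi : cores R n -> 'rV[R]_N) (L : R) :
  (2 <= K)%N -> multilinear Phi ->
  forall (a : 'I_K -> R) (b : R),
  exists C : R,
    forall (f : 'rV[R]_N -> R) (G : cores R n),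
      C1 f -> grad_lipschitz f L ->
      (forall k, frob (G k) = a k) ->
      frob (grad f (Phi G)) = b ->
      (exists k, pgrad Phi f G k != 0) ->
      forall rho : R, 0 < rho <= 1 ->
        `| dQdt Phi f rho G
           - 4 * rho * sam_u Phi f G * K%:R
               * cov (fun k => frob (G k) ^+ 2) (fun k => frob (pgrad Phi f G k) ^+ 2) |
        <= C * rho ^+ 2.
Proof.
move=> K_ge2 Phi_ml a b.
exists (4 * K%:R * (2 * \sum_k a k ^+ 2) * pgrad_shift_const Phi a b L).
move=> f G [f_diff _] f_lip Ga gradb _ rho /andP[rho_gt0 rho_le1].
have rho_01 : 0 <= rho <= 1 by rewrite ltW.
rewrite dQdt_sam_sub_cov ?(leq_trans _ K_ge2) // mulr_sumr.
apply: le_trans (ler_norm_sum _ _ _) (le_trans (ler_sum _ _) _) => [k _|].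
  exact: sam_remainder_term_le Phi_ml f_diff f_lip Ga gradb rho_01.
rewrite sumr_const card_ord -mulr_natl le_eqVlt; apply/predU1P; left; ring.
Qed.
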